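(* Let $d\ge 1$ and $s\ge 2$ be integers. If $s\equiv 1\pmod{d+2}$, then there are exactly two $(s,s+1)$-core partitions with $d$-distinct parts of largest size; otherwise there is exactly one such partition of largest size.
   Context: A partition $\lambda=(\lambda_1,\ldots,\lambda_l)$ is a finite nonincreasing sequence of positive integers (the empty partition is allowed); its size is $|\lambda|=\lambda_1+\cdots+\lambda_l$. $\lambda$ is a partition with $d$-distinct parts if $\lambda_i-\lambda_{i+1}\ge d$ for all $1\le i\le l-1$. In the Young diagram of $\lambda$, the hook length of box $(i,j)$ is the number of boxes directly to its right, plus the number directly below it, plus one. $\lambda$ is an $(s,s+1)$-core partition if no box has hook length $s$ or $s+1$. ''Of largest size'' means of maximum size among all $(s,s+1)$-core partitions with $d$-distinct parts. *)

(* Partitions are represented as seq nat (parts listed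
   in nonincreasing order, all positive). Boxes are 0-indexed (i, j)
   with i < size lam and j < lam_i. *)
From mathcomp Require Import all_boot.
Set Implicit Arguments. Unset Strict Implicit. Unset Printing Implicit Defensive.

Definition is_partition (lam : seq nat) : bool :=
  sorted geq lam && all (fun x => 0 < x) lam.

Definition d_distinct (d : nat) (lam : seq nat) : bool :=
  sorted (fun a b => b + d <= a) lam.

Definition psize (lam : seq nat) : nat := sumn lam.

Definition conj_part (lam : seq nat) (j : nat) : nat := count (fun x => j < x) lam.

Definition hook (lam : seq nat) (i j : nat) : nat :=
  (nth 0 lam i - j - 1) + (conj_part lam j - i - 1) + 1.

Definition has_hook (lam : seq nat) (h : nat) : bool :=
  has (fun i => has (fun j => hook lam i j == h) (iota 0 (nth 0 lam i)))
      (iota 0 (size lam)).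

Definition is_core2 (s t : nat) (lam : seq nat) : bool :=
  ~~ has_hook lam s && ~~ has_hook lam t.

Definition core_ddist (s d : nat) (lam : seq nat) : bool :=
  [&& is_partition lam, d_distinct d lam & is_core2 s s.+1 lam].

From mathcomp Require Import all_boot zify.
Set Implicit Arguments. Unset Strict Implicit. Unset Printing Implicit Defensive.

(* For a partition with distinct parts the hook lengths along the first row
   decrease from the largest hook lam_1 + l - 1 down to 1 by at most 2 at each
   step, so it is an (s, s+1)-core iff its largest hook is below s.  Among the
   d-distinct partitions with l parts and lam_1 + l <= s, the staircase
   (s - l, s - l - d, ...) is pointwise largest, and its size is a concave
   quadratic in l.  Writing s - 1 = q (d + 2) + r, the quadratic is maximal at
   l = q + 1, and also at l = q exactly when r = 0. *)

Lemma geq_trans : transitive geq.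
Proof. by move=> y x z /= hyx hzy; apply: leq_trans hzy hyx. Qed.

Lemma gtn_trans : transitive gtn.
Proof. by move=> y x z /= hyx hzy; apply: ltn_trans hzy hyx. Qed.

Lemma conj_partS lam j : conj_part lam j = conj_part lam j.+1 + count_mem j.+1 lam.
Proof. by rewrite /conj_part; elim: lam => //= x t ->; case: ltngtP; lia. Qed.

Lemma hook_lt_size_head lam i j : is_partition lam ->
  i < size lam -> j < nth 0 lam i -> hook lam i j < size lam + head 0 lam.
Proof.
case/andP=> sorted_lam _ hi hj.
have : nth 0 lam i <= nth 0 lam 0.
  by apply: (sorted_leq_nth geq_trans leqnn) => //; rewrite inE (leq_ltn_trans _ hi).
have := count_size (fun x => j < x) lam.
rewrite /hook /conj_part nth0; lia.
Qed.

Lemma no_hook_ge_size_head lam h : is_partition lam ->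
  size lam + head 0 lam <= h -> ~~ has_hook lam h.
Proof.
move=> lam_part hh; apply/hasPn => i; rewrite mem_iota => /andP[_ hi].
apply/hasPn => j; rewrite mem_iota => /andP[_ hj].
have := hook_lt_size_head lam_part hi hj; lia.
Qed.

Lemma descent_by_two_hits (f : nat -> nat) s n :
  (forall j, j < n -> f j <= f j.+1 + 2) -> s <= f 0 -> f n <= s.+1 ->
  exists2 j, j <= n & (f j == s) || (f j == s.+1).
Proof.
elim: n f => [|n IH] f step f0 fn; first by exists 0 => //; lia.
case: (ltnP s.+1 (f 0)) => [f0_big|f0_small]; last by exists 0 => //; lia.
have [|j hj hfj] := IH (fun j => f j.+1) (fun j hj => step j.+1 hj) _ fn.
  by have := step 0 isT; lia.
by exists j.+1.
Qed.

Lemma size_head_le_of_core2 s lam : is_partition lam -> uniq lam ->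
  ~~ has_hook lam s -> ~~ has_hook lam s.+1 -> size lam + head 0 lam <= s.
Proof.
move=> lam_part lam_uniq no_s no_s1; rewrite leqNgt; apply/negP => big.
case/andP: (lam_part) => lam_sorted lam_pos.
have lam_gtn : sorted gtn lam by rewrite gtn_sorted_uniq_geq lam_uniq.
case lamE: lam big lam_pos => [|a t] //= big /andP[a_pos t_pos].
have t_lt_a : all (fun x => x < a) t.
  by move: lam_gtn; rewrite lamE => /(order_path_min gtn_trans).
have conj_pos j : j < a -> 0 < conj_part lam j by rewrite lamE /conj_part /= => ->.
pose f j := hook lam 0 j.
have fE j : j < a -> f j = a - j.+1 + conj_part lam j.
  by move=> hj; have := conj_pos j hj; rewrite /f /hook lamE /=; lia.
have conj0 : conj_part lam 0 = size lam.
  by apply/eqP; rewrite -all_count lamE /= a_pos.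
have conj_last : conj_part lam a.-1 = 1.
  rewrite lamE /conj_part /= prednK // leqnn add1n; congr _.+1.
  apply/eqP; rewrite eqn0Ngt -has_count; apply/hasPn => x /(allP t_lt_a) /=.
  lia.
have row0_avoids h : ~~ has_hook lam h -> forall j, j < a -> f j != h.
  by move=> /hasPn nohook j hj; apply: (hasPn (nohook 0 _)); rewrite mem_iota lamE.
have [|||j hj] := @descent_by_two_hits f s a.-1.
- move=> j hj; rewrite !fE; try lia.
  have := conj_partS lam j; have : count_mem j.+1 lam <= 1.
    by rewrite count_uniq_mem // leq_b1.
  lia.
- by rewrite fE // conj0 lamE /=; lia.
- by rewrite fE ?conj_last; lia.
have j_lt_a : j < a by lia.
by rewrite (negPf (row0_avoids _ no_s j j_lt_a)) (negPf (row0_avoids _ no_s1 j j_lt_a)).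
Qed.

Lemma core2_distinctE s lam : is_partition lam -> uniq lam ->
  is_core2 s s.+1 lam = (size lam + head 0 lam <= s).
Proof.
move=> lam_part lam_uniq; apply/andP/idP => [[]|small].
  exact: size_head_le_of_core2.
by split; apply: no_hook_ge_size_head => //; lia.
Qed.

Lemma d_distinct_uniq d lam : 0 < d -> d_distinct d lam -> uniq lam.
Proof. by move=> d_gt0; apply: sorted_uniq => [x y z /=|x /=]; lia. Qed.

Lemma core_ddistE s d lam : 0 < d ->
  core_ddist s d lam =
  [&& is_partition lam, d_distinct d lam & size lam + head 0 lam <= s].
Proof.
move=> d_gt0; rewrite /core_ddist.
case lam_part: (is_partition lam); case lam_dd: (d_distinct d lam) => //=.
by rewrite core2_distinctE // (d_distinct_uniq d_gt0 lam_dd).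
Qed.

Lemma d_distinct_nth d lam i : d_distinct d lam -> i < size lam ->
  nth 0 lam i + i * d <= head 0 lam.
Proof.
move=> /sortedP dd; elim: i => [|i IH] hi; first by rewrite addn0 nth0.
have := dd 0 i hi; have := IH (ltnW hi); lia.
Qed.

Definition staircase d c n := mkseq (fun i => c - i * d) n.

Lemma size_staircase d c n : size (staircase d c n) = n.
Proof. exact: size_mkseq. Qed.

Lemma nth_staircase d c n i : i < n -> nth 0 (staircase d c n) i = c - i * d.
Proof. exact: nth_mkseq. Qed.

Lemma staircase_partition d c n : n * d < c + d -> is_partition (staircase d c n).
Proof.
move=> fits; apply/andP; split.
- apply/(sortedP 0) => i; rewrite size_staircase => hi.
  by rewrite /= (nth_staircase _ _ hi) (nth_staircase _ _ (ltnW hi)) mulSn; lia.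
- apply/allP => x /(nthP 0)[i]; rewrite size_staircase => hi <-.
  by rewrite nth_staircase //; nia.
Qed.

Lemma staircase_d_distinct d c n : n * d <= c + d -> d_distinct d (staircase d c n).
Proof.
move=> fits; apply/(sortedP 0) => i; rewrite size_staircase => hi.
by rewrite /= (nth_staircase _ _ hi) (nth_staircase _ _ (ltnW hi)) mulSn; nia.
Qed.

Lemma sumn_staircase d c n : n * d <= c + d ->
  2 * sumn (staircase d c n) + d * n * n = 2 * n * c + d * n.
Proof.
elim: n => [|n IH] fits; first by rewrite !muln0.
rewrite /staircase mkseqS sumn_rcons -/(staircase d c n).
have := IH ltac:(nia); nia.
Qed.

Lemma leq_sumn_nth (u v : seq nat) : size u = size v ->
  (forall i, i < size u -> nth 0 u i <= nth 0 v i) -> sumn u <= sumn v.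
Proof.
elim: u v => [|x u IH] [|y v] //= [eq_size] le_uv.
by rewrite leq_add ?(le_uv 0) // IH // => i; apply: (le_uv i.+1).
Qed.

Lemma eq_sumn_nth (u v : seq nat) : size u = size v ->
  (forall i, i < size u -> nth 0 u i <= nth 0 v i) -> sumn u = sumn v -> u = v.
Proof.
elim: u v => [|x u IH] [|y v] //= [eq_size] le_uv eq_sum.
have le_xy : x <= y := le_uv 0 isT.
have le_tail i : i < size u -> nth 0 u i <= nth 0 v i := le_uv i.+1.
have le_sum := leq_sumn_nth eq_size le_tail.
have xy : x = y by lia.
by rewrite xy (IH v) //; lia.
Qed.

(* The pointwise largest d-distinct partition with [l] parts and largest hook
   below [s]. *)
Definition stair d s l := staircase d (s - l) l.

Lemma stair_core_ddist d s l : 0 < d -> l + l * d < s + d ->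
  core_ddist s d (stair d s l).
Proof.
move=> d_gt0 fits.
rewrite core_ddistE // staircase_partition ?staircase_d_distinct /=; try nia.
by rewrite size_staircase; case: l fits => //= l; lia.
Qed.

Lemma core_ddist_fits d s lam : 0 < d -> core_ddist s d lam ->
  size lam + size lam * d < s + d.
Proof.
move=> d_gt0; rewrite core_ddistE // => /and3P[/andP[_ pos] dd small].
case: lam pos dd small => [|a t] pos dd small /=; first lia.
have := d_distinct_nth dd (ltnSn (size t)).
have : 0 < nth 0 (a :: t) (size t) by apply/(allP pos)/mem_nth.
move: small => /=; rewrite mulSn; lia.
Qed.

Lemma core_ddist_le_stair d s lam i : 0 < d -> core_ddist s d lam ->
  i < size lam -> nth 0 lam i <= nth 0 (stair d s (size lam)) i.
Proof.
move=> d_gt0; rewrite core_ddistE // => /and3P[_ dd small] hi.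
by rewrite nth_staircase //; have := d_distinct_nth dd hi; lia.
Qed.

Lemma psize_stair d s l : l + l * d < s + d ->
  2 * psize (stair d s l) + (d + 2) * l * l = l * (2 * s + d).
Proof.
move=> fits; have l_le_s : l <= s by case: l fits => // l; rewrite mulSn; lia.
have := @sumn_staircase d (s - l) l ltac:(lia).
rewrite /psize /stair; nia.
Qed.

(* With [X = 2 * psize (stair d s l)] and [Y = 2 * psize (stair d s q.+1)],
   [Y - X = (q + 1 - l) * ((d + 2) * (q - l) + 2 * r)] over the integers. *)
Lemma stair_value_max d s q r l X Y : s = q * (d + 2) + r + 1 -> r < d + 2 ->
  X + (d + 2) * l * l = l * (2 * s + d) ->
  Y + (d + 2) * q.+1 * q.+1 = q.+1 * (2 * s + d) ->
  X <= Y /\ (X = Y <-> l = q.+1 \/ r = 0 /\ l = q).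
Proof.
move=> -> r_lt hX hY.
case: (ltngtP l q.+1) => [l_le_q | q1_lt_l | lE]; last by rewrite lE in hX *; lia.
- have [k qE] : exists k, q = l + k by exists (q - l); lia.
  rewrite qE in hY *.
  have gain : Y = X + k.+1 * ((d + 2) * k + 2 * r) by lia.
  have [k0 | k_gt0] := posnP k; last by nia.
  by rewrite gain k0; case: (posnP r) => [->|]; lia.
- have [k lE] : exists k, l = q.+2 + k by exists (l - q.+2); lia.
  rewrite lE in hX *.
  have gain : Y + 2 * r * k.+1 = X + k.+1 * (d + 2) * k.+2 by lia.
  have : 2 * r * k.+1 < k.+1 * (d + 2) * k.+2 by nia.
  lia.
Qed.

Section MaximalCores.

Variables d s q r : nat.
Hypotheses (d_gt0 : 0 < d) (s_ge2 : 2 <= s).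
Hypotheses (sE : s = q * (d + 2) + r + 1) (r_lt : r < d + 2).

Lemma stair_fits_succ : q.+1 + q.+1 * d < s + d.
Proof. by have := s_ge2; rewrite sE; case: (posnP q) => [->|q_gt0]; nia. Qed.

Lemma stair_fits : q + q * d < s + d.
Proof. by rewrite sE; nia. Qed.

Lemma psize_stair_max l : l + l * d < s + d ->
  psize (stair d s l) <= psize (stair d s q.+1) /\
  (psize (stair d s l) = psize (stair d s q.+1) <-> l = q.+1 \/ r = 0 /\ l = q).
Proof.
move=> fits; have hX := psize_stair fits; have hY := psize_stair stair_fits_succ.
have [le_XY eq_XY] := stair_value_max sE r_lt hX hY.
by split; [lia | rewrite -eq_XY; lia].
Qed.

Lemma core_ddist_psize_le mu : core_ddist s d mu ->
  psize mu <= psize (stair d s q.+1).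
Proof.
move=> mu_core; apply: leq_trans (psize_stair_max (core_ddist_fits d_gt0 mu_core)).1.
apply: leq_sumn_nth; first by rewrite size_staircase.
by move=> i; apply: core_ddist_le_stair.
Qed.

Lemma max_core_ddistP lam :
  (core_ddist s d lam /\ forall mu, core_ddist s d mu -> psize mu <= psize lam) <->
  lam = stair d s q.+1 \/ r = 0 /\ lam = stair d s q.
Proof.
split=> [[lam_core lam_max] | lam_top].
- have fits := core_ddist_fits d_gt0 lam_core.
  have le_lam := core_ddist_le_stair d_gt0 lam_core.
  have eq_size := esym (size_staircase d (s - size lam) (size lam)).
  have le_sum : psize lam <= psize (stair d s (size lam)).
    exact: leq_sumn_nth eq_size le_lam.
  have [le_stair eq_stair] := psize_stair_max fits.
  have le_top := lam_max _ (stair_core_ddist d_gt0 stair_fits_succ).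
  have lamE : lam = stair d s (size lam).
    apply: eq_sumn_nth eq_size le_lam _.
    by change (psize lam = psize (stair d s (size lam))); lia.
  have /eq_stair[l_top | [r0 l_q]] :
    psize (stair d s (size lam)) = psize (stair d s q.+1) by lia.
  + by left; rewrite lamE l_top.
  + by right; split; rewrite // lamE l_q.
- have [l [lE fits top]] : exists l, [/\ lam = stair d s l, l + l * d < s + d &
      psize (stair d s l) = psize (stair d s q.+1)].
    case: lam_top => [->|[r0 ->]].
      by exists q.+1; split => //; exact: stair_fits_succ.
    by exists q; split; [|exact: stair_fits|apply/(psize_stair_max stair_fits).2; right].
  split; first by rewrite lE; exact: stair_core_ddist.
  by move=> mu /core_ddist_psize_le; rewrite lE top.
Qed.

End MaximalCores.

Theorem mainTheorem6 (d s : nat) (hd : 1 <= d) (hs : 2 <= s) :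
  exists L : seq (seq nat),
    uniq L /\
    (forall lam : seq nat,
        lam \in L <->
        (core_ddist s d lam /\
         forall mu : seq nat, core_ddist s d mu -> psize mu <= psize lam)) /\
    size L = (if s %% (d + 2) == 1 then 2 else 1).
Proof.
set q := (s - 1) %/ (d + 2); set r := (s - 1) %% (d + 2).
have sE : s = q * (d + 2) + r + 1 by rewrite /q /r -divn_eq; lia.
have r_lt : r < d + 2 by rewrite ltn_mod addn2.
have modE : (s %% (d + 2) == 1) = (r == 0).
  by rewrite /r -/(dvdn _ _) -eqn_mod_dvd 1?(@modn_small 1) ?addn2 //; lia.
have stairs_neq : stair d s q.+1 != stair d s q.
  by apply/eqP => /(congr1 size); rewrite !size_staircase; lia.
have maxP := max_core_ddistP hd hs sE r_lt.
rewrite modE; have [r0 | r_neq0] := eqVneq r 0.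
- exists [:: stair d s q.+1; stair d s q]; split; first by rewrite /= inE stairs_neq.
  split=> // lam; rewrite maxP !inE.
  by split=> [/orP[]/eqP->|[->|[_ ->]]]; rewrite ?eqxx ?orbT; auto.
- exists [:: stair d s q.+1]; split=> //; split=> // lam; rewrite maxP inE.
  by split=> [/eqP->|[->|[r0]]]; [left | | rewrite r0 eqxx in r_neq0].
Qed.
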